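(* Let $\sigma$ and $\sigma'$ be two triangulations of the polygon $P$. For any two edges $(P_i,P_{i'})$ and $(P_j,P_{j'})$ belonging to both $\sigma$ and $\sigma'$, the minimal $\theta$-length of paths from $(P_i,P_{i'})$ to $(P_j,P_{j'})$ in $Q_\sigma$ equals the minimal $\theta$-length of such paths in $Q_{\sigma'}$.
   Context: $P$ is a regular polygon with vertices $P_1,\dots,P_n$ ($n\ge3$) counterclockwise; a triangulation is a maximal set of non-crossing diagonals; its edges are the sides of $P$ and its diagonals, $(P_a,P_b)$ being the edge joining $P_a,P_b$. $Q_\sigma$ has vertices the edges of $\sigma$; an internal arrow $a\to b$ whenever $a,b$ are sides of a common triangle of $\sigma$ and $a$ precedes $b$ anticlockwise around their common vertex; an external arrow $a\to b$ between the two sides of $P$ at each polygon vertex incident to a diagonal of $\sigma$, $a$ preceding $b$ anticlockwise. The $\theta$-length of an internal arrow $a\to b$ is $t$ if the angle between $a$ and $b$ in their triangle is $t\pi/n$; an external arrow has $\theta$-length $2$; $\theta$-length is additive on paths. *)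

From mathcomp Require Import all_boot.
Set Implicit Arguments. Unset Strict Implicit. Unset Printing Implicit Defensive.

Section Polygon.
Variable n : nat.

(* Vertices P_1..P_n are 'I_n, numbered counterclockwise.
   cdist i j = number of counterclockwise steps from P_i to P_j. *)
Definition cdist (i j : 'I_n) : nat := (j + n - i) %% n.

Definition btw (a x b : 'I_n) : Prop := 0 < cdist a x < cdist a b.

(* An edge (P_a,P_b) is the 2-element set {a,b}. *)
Definition is_side (e : {set 'I_n}) : Prop :=
  exists i j : 'I_n, e = [set i; j] /\ cdist i j = 1.

Definition is_diag (e : {set 'I_n}) : Prop :=
  exists i j : 'I_n, [/\ e = [set i; j], i != j, cdist i j != 1 & cdist j i != 1].

(* two diagonals cross iff their endpoints interleave cyclically *)
Definition cross (d1 d2 : {set 'I_n}) : Prop :=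
  exists a b c d : 'I_n,
    [/\ d1 = [set a; b], d2 = [set c; d], btw a c b & btw b d a].

Definition triangulation (s : {set {set 'I_n}}) : Prop :=
  [/\ (forall d, d \in s -> is_diag d),
      (forall d1 d2, d1 \in s -> d2 \in s -> ~ cross d1 d2) &
      (forall d, is_diag d -> (forall d', d' \in s -> ~ cross d d') -> d \in s)].

Definition edge_of (s : {set {set 'I_n}}) (e : {set 'I_n}) : Prop :=
  is_side e \/ e \in s.

Definition ccw_triangle (s : {set {set 'I_n}}) (x y z : 'I_n) : Prop :=
  [/\ btw x y z, edge_of s [set x; y], edge_of s [set y; z] & edge_of s [set x; z]].

(* Internal: in the triangle x,y,z (ccw), around x the side xy precedes xz
   anticlockwise; the angle at x is (cdist y z) * pi / n. *)
Definition arrow (s : {set {set 'I_n}}) (a b : {set 'I_n}) (t : nat) : Prop :=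
  (exists x y z : 'I_n,
     [/\ ccw_triangle s x y z, a = [set x; y], b = [set x; z] & t = cdist y z])
  \/
  (exists u v w : 'I_n,
     [/\ (exists d, d \in s /\ v \in d), cdist u v = 1 /\ cdist v w = 1,
         a = [set u; v], b = [set v; w] & t = 2]).

Inductive qpath (s : {set {set 'I_n}}) : {set 'I_n} -> {set 'I_n} -> nat -> Prop :=
  | qpath_nil a : qpath s a a 0
  | qpath_cons a b c t L : arrow s a b t -> qpath s b c L -> qpath s a c (t + L).

Definition min_theta (s : {set {set 'I_n}}) (a b : {set 'I_n}) (m : nat) : Prop :=
  qpath s a b m /\ (forall L, qpath s a b L -> m <= L).

End Polygon.

From mathcomp Require Import all_boot zify.
From Stdlib Require Import Classical.
Set Implicit Arguments. Unset Strict Implicit. Unset Printing Implicit Defensive.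

(* Every arrow of theta-length t moves the endpoints of an edge counterclockwise
   by t steps in total, so going from the edge {a, b} to the edge {c, d} costs at
   least theta_dist a b c d, the cheaper way of matching the endpoints.
   Conversely, in any triangulation containing both edges this bound is attained:
   walk around the fan of triangles at one endpoint, or across the two sides at a
   polygon vertex. *)

Lemma classical_ex_minn (P : nat -> Prop) :
  (exists k, P k) -> exists k, P k /\ forall j, j < k -> ~ P j.
Proof.
move=> [k Pk]; elim/ltn_ind: k Pk => k IH Pk.
case: (classic (exists j, j < k /\ P j)) => [[j [ltjk Pj]]|none]; first exact: IH Pj.
by exists k; split=> // j ltjk Pj; apply: none; exists j.
Qed.

Lemma set2C (T : finType) (a b : T) : [set a; b] = [set b; a].
Proof. exact: setUC. Qed.

Lemma set2_inj (T : finType) (a b c d : T) :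
  [set a; b] = [set c; d] -> (a = c /\ b = d) \/ (a = d /\ b = c).
Proof.
move=> E.
have ha : a \in [set c; d] by rewrite -E set21.
have hb : b \in [set c; d] by rewrite -E set22.
have hc : c \in [set a; b] by rewrite E set21.
have hd : d \in [set a; b] by rewrite E set22.
move: ha hb hc hd; rewrite !inE => /orP[]/eqP ha /orP[]/eqP hb /orP[]/eqP hc /orP[]/eqP hd;
  subst; intuition congruence.
Qed.

Lemma cdist_le n (i j : 'I_n) : i <= j -> cdist i j = j - i.
Proof.
by move=> le_ij; have := ltn_ord j; rewrite /cdist -addnBAC // modnDr => ?; rewrite modn_small //; lia.
Qed.

Lemma cdist_gt n (i j : 'I_n) : j < i -> cdist i j = j + n - i.
Proof. by move=> lt_ji; have := ltn_ord i; rewrite /cdist => ?; rewrite modn_small //; lia. Qed.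

(* Splits on the order of the endpoints of every [cdist] in the goal, turning
   cyclic distances into ordinary differences for lia. *)
Ltac cdist_lia :=
  rewrite /btw;
  repeat match goal with |- context[@cdist ?n ?i ?j] =>
    have := ltn_ord i; have := ltn_ord j;
    let h := fresh "h" in
    case: (leqP i j) => h; [rewrite (cdist_le h) | rewrite (cdist_gt h)]; move: h;
    try (intros; exfalso; lia) end;
  intros; lia.

Section CyclicDistance.
Variable n : nat.
Implicit Types a b c x y z : 'I_n.

Lemma cdistxx x : cdist x x = 0.
Proof. cdist_lia. Qed.

Lemma cdist_triangle x y z : cdist x z <= cdist x y + cdist y z.
Proof. cdist_lia. Qed.

Lemma cdist_sub a x y : cdist a x <= cdist a y -> cdist x y = cdist a y - cdist a x.
Proof. cdist_lia. Qed.

Lemma cdistI a : injective (cdist a).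
Proof. by move=> x y h; apply/val_inj => /=; move: h; cdist_lia. Qed.

Lemma cdistIl a : injective (fun x => cdist x a).
Proof. by move=> x y h; apply/val_inj => /=; move: h; cdist_lia. Qed.

Lemma cdist_gt0 x y : (0 < cdist x y) = (x != y).
Proof.
rewrite lt0n; congr negb; apply/eqP/eqP => [h|->]; last exact: cdistxx.
by apply: (cdistI (a := x)); rewrite h cdistxx.
Qed.

Lemma cdist_succ_exists x : 1 < n -> exists w, cdist x w = 1.
Proof.
move=> lt1n; have lt_x := ltn_ord x.
case: (ltnP x.+1 n) => [lt_w|ge_w].
  by exists (Ordinal lt_w); rewrite cdist_le /=; lia.
have lt_0 : 0 < n by lia.
by exists (Ordinal lt_0); rewrite cdist_gt /=; lia.
Qed.

Lemma cdist_pred_exists x : 1 < n -> exists w, cdist w x = 1.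
Proof.
move=> lt1n; have lt_x := ltn_ord x.
case: (posnP x) => [x0|x_gt0].
  have lt_w : n.-1 < n by lia.
  by exists (Ordinal lt_w); rewrite cdist_gt /=; lia.
have lt_w : x.-1 < n by lia.
by exists (Ordinal lt_w); rewrite cdist_le /=; lia.
Qed.

End CyclicDistance.

Definition theta_dist n (a b c d : 'I_n) : nat :=
  minn (cdist a c + cdist b d) (cdist a d + cdist b c).

Lemma theta_dist_swapl n (a b c d : 'I_n) : theta_dist b a c d = theta_dist a b c d.
Proof. by rewrite /theta_dist minnC [cdist b c + _]addnC [cdist b d + _]addnC. Qed.

Lemma theta_dist_swapr n (a b c d : 'I_n) : theta_dist a b d c = theta_dist a b c d.
Proof. by rewrite /theta_dist minnC. Qed.

Lemma theta_dist_shared n (a b d : 'I_n) : theta_dist a b a d = cdist b d.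
Proof. by rewrite /theta_dist cdistxx; have := cdist_triangle b a d; lia. Qed.

Section Quiver.
Variables (n : nat) (s : {set {set 'I_n}}).

Lemma qpath_cat a b c L1 L2 : qpath s a b L1 -> qpath s b c L2 -> qpath s a c (L1 + L2).
Proof.
elim=> [//|a' b' c' t L arr _ IH] p2.
by rewrite -addnA; apply: qpath_cons arr (IH p2).
Qed.

Lemma theta_dist_le_qpath a b c d L :
  qpath s [set a; b] [set c; d] L -> theta_dist a b c d <= L.
Proof.
move e_ab: [set a; b] => e; move e_cd: [set c; d] => f p.
elim: p a b e_ab e_cd => [e0|e0 e1 e2 t L0 arr _ IH] a b e_ab e_cd.
  by rewrite -e_cd in e_ab; case: (set2_inj e_ab) => -[-> ->]; rewrite /theta_dist !cdistxx; lia.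
case: arr => [[x [y [z [_ e_xy e_xz ->]]]]|[u [v [w [_ [uv vw] e_uv e_vw ->]]]]].
- have := IH x z (esym e_xz) e_cd; rewrite -e_ab in e_xy.
  have := cdist_triangle y z c; have := cdist_triangle y z d.
  by case: (set2_inj e_xy) => -[-> ->]; rewrite /theta_dist; lia.
- have := IH w v (etrans (set2C w v) (esym e_vw)) e_cd; rewrite -e_ab in e_uv.
  have := cdist_triangle u w c; have := cdist_triangle u w d; have := cdist_triangle u v w.
  by case: (set2_inj e_uv) => -[-> ->]; rewrite /theta_dist; lia.
Qed.

Lemma ccw_triangle_rot x y z : ccw_triangle s x y z -> ccw_triangle s y z x.
Proof.
by case=> xyz xy yz xz; split=> //; [move: xyz; cdist_lia | rewrite set2C..].
Qed.

Hypotheses (n_ge3 : 3 <= n) (tri_s : triangulation s).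

Lemma edge_of_neq a b : edge_of s [set a; b] -> a != b.
Proof.
case: tri_s => diag _ _ e_ab; apply/eqP => a_b; subst b.
have eq_of_aa i j : [set a; a] = [set i; j] -> i = j by case/set2_inj => -[<- <-].
case: e_ab => [[i [j [e_ij ij1]]]|e_s]; first by rewrite (eq_of_aa _ _ e_ij) cdistxx in ij1.
by have [i [j [e_ij /eqP ij _ _]]] := diag _ e_s; apply/ij/eq_of_aa.
Qed.

Lemma edge_of_ncross e f : edge_of s e -> edge_of s f -> ~ cross e f.
Proof.
case: tri_s => _ ncross _ He Hf cross_ef; have [a [b [c [d [e_ab f_cd acb bda]]]]] := cross_ef.
case: He => [[i [j [e_ij ij1]]]|He].
  by rewrite e_ab in e_ij; case: (set2_inj e_ij) => -[? ?]; subst; move: ij1 acb bda; cdist_lia.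
case: Hf => [[i [j [e_ij ij1]]]|Hf].
  by rewrite f_cd in e_ij; case: (set2_inj e_ij) => -[? ?]; subst; move: ij1 acb bda; cdist_lia.
exact: ncross He Hf cross_ef.
Qed.

Lemma edge_of_fan_gap x y w :
  edge_of s [set x; y] -> edge_of s [set x; w] -> btw y w x ->
  (forall v, btw y v w -> ~ edge_of s [set x; v]) -> edge_of s [set y; w].
Proof.
move=> Hxy Hxw ywx gap.
have [yw1|yw_ne1] := eqVneq (cdist y w) 1; first by left; exists y, w.
case: tri_s => _ _ maximal; right; apply: maximal.
  exists y, w; split=> //; first by rewrite -cdist_gt0; case/andP: ywx.
  by move: ywx; cdist_lia.
(* a diagonal crossing [y; w] ends in (w, x), at x or in (x, y); it then crosses
   [w; x], fills the gap, or crosses [x; y] *)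
move=> d' d's [a [b [c [d [e_ab e_cd acb bda]]]]].
have [c0 [d0 [e_d' yc0w wd0y]]] :
    exists c0 d0, [/\ d' = [set c0; d0], btw y c0 w & btw w d0 y].
  by case: (set2_inj e_ab) => -[? ?]; subst; [exists c, d | exists d, c; rewrite set2C].
case: (ltngtP (cdist y d0) (cdist y x)) => yd0.
- apply: (edge_of_ncross (e := [set w; x]) (f := d')); [by rewrite set2C | by right |].
  exists w, x, d0, c0; split; first by [].
  + by rewrite e_d' set2C.
  + by move: yd0 yc0w wd0y ywx; cdist_lia.
  + by move: yd0 yc0w wd0y ywx; cdist_lia.
- apply: (edge_of_ncross Hxy (or_intror d's)).
  exists x, y, d0, c0; split; first by [].
  + by rewrite e_d' set2C.
  + by move: yd0 yc0w wd0y ywx; cdist_lia.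
  + by move: yd0 yc0w wd0y ywx; cdist_lia.
- rewrite (cdistI yd0) in e_d'.
  by apply: (gap c0 yc0w); right; rewrite set2C -e_d'.
Qed.

Lemma ccw_triangle_on_edge x y :
  edge_of s [set x; y] -> 1 < cdist y x -> exists2 w, btw y w x & ccw_triangle s x y w.
Proof.
move=> Hxy yx_gt1.
have [w0 w0x] := cdist_pred_exists x (ltnW n_ge3).
have /classical_ex_minn[k [[w [yw_k ywx Hxw]] k_min]] :
    exists k w, [/\ cdist y w = k, btw y w x & edge_of s [set x; w]].
  exists (cdist y w0), w0; split=> //; last by left; exists w0, x; rewrite set2C.
  by move: w0x yx_gt1; cdist_lia.
exists w => //; split=> //; first by move: ywx; cdist_lia.
apply: (edge_of_fan_gap Hxy Hxw ywx) => v ywv Hxv; apply: (k_min (cdist y v)).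
  by rewrite -yw_k; case/andP: ywv.
by exists v; split=> //; move: ywv ywx; cdist_lia.
Qed.

Lemma ccw_triangle_free_vertex y x w : cdist y x = 1 -> cdist x w = 1 ->
  ~ (exists d, d \in s /\ x \in d) -> ccw_triangle s y x w.
Proof.
move=> yx xw free.
have side_yx : edge_of s [set y; x] by left; exists y, x.
have xy_gt1 : 1 < cdist x y by move: yx n_ge3; cdist_lia.
have [w' xw'y tri_w'] := ccw_triangle_on_edge side_yx xy_gt1.
suff e_w' : w' = w by rewrite -e_w'.
have [_ _ Hxw' _] := tri_w'.
case: Hxw' => [[i [j [e_ij ij1]]]|w's]; last by case: free; exists [set x; w']; rewrite set21.
case: (set2_inj e_ij) => -[<- <-] in ij1; first by apply: (cdistI (a := x)); rewrite ij1.
by rewrite -ij1 in yx; move: xw'y; rewrite (cdistIl yx) /btw; lia.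
Qed.

Lemma qpath_across_vertex y x w : cdist y x = 1 -> cdist x w = 1 ->
  qpath s [set y; x] [set x; w] 2.
Proof.
move=> yx xw; case: (classic (exists d, d \in s /\ x \in d)) => [diag|free].
  by rewrite -[2]addn0; apply: qpath_cons (qpath_nil _ _); right; exists y, x, w.
have yxw := ccw_triangle_free_vertex yx xw free.
have -> : 2 = cdist x w + (cdist y x + 0) by rewrite xw yx.
apply: (qpath_cons (b := [set y; w])).
  by left; exists y, x, w.
rewrite set2C (set2C x w); apply: qpath_cons (qpath_nil _ _).
by left; exists w, y, x; split=> //; do 2!apply: ccw_triangle_rot.
Qed.

Lemma qpath_fan x y z : edge_of s [set x; y] -> edge_of s [set x; z] -> y != x -> z != x ->
  qpath s [set x; y] [set x; z] (cdist y z).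
Proof.
have [k] := ubnP (cdist y z); elim: k y => // k IH y lt_yz_k Hxy Hxz yx zx.
have [<-|yz] := eqVneq y z; first by rewrite cdistxx; apply: qpath_nil.
have yz_gt0 : 0 < cdist y z by rewrite cdist_gt0.
have [yx_gt1|yx_le1] := ltnP 1 (cdist y x).
  have [w ywx xyw] := ccw_triangle_on_edge Hxy yx_gt1; have [_ _ Hyw Hxw] := xyw.
  have yw_le_yz : cdist y w <= cdist y z. (* otherwise [y; w] crosses [z; x] *)
    rewrite leqNgt; apply/negP => yz_lt_yw.
    apply: (edge_of_ncross Hyw (f := [set z; x])); first by rewrite set2C.
    by exists y, w, z, x; split=> //; [rewrite /btw yz_gt0 | move: ywx yz_lt_yw; cdist_lia].
  have wz : cdist w z = cdist y z - cdist y w by rewrite (cdist_sub yw_le_yz).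
  have -> : cdist y z = cdist y w + cdist w z by move: ywx; rewrite wz /btw; lia.
  apply: qpath_cons (IH w _ Hxw Hxz _ zx); first by left; exists x, y, w.
    by move: ywx; rewrite wz /btw; lia.
  by apply: contraTneq ywx => ->; rewrite /btw ltnn andbF.
have yx1 : cdist y x = 1 by move: yx_le1; rewrite -cdist_gt0 in yx; lia.
have [w xw] := cdist_succ_exists x (ltnW n_ge3).
have zx_gt0 : 0 < cdist x z by rewrite cdist_gt0 eq_sym.
have yz_w : cdist y z = 2 + cdist w z by move: n_ge3 yx1 xw zx_gt0 yz_gt0; cdist_lia.
rewrite yz_w set2C; apply: qpath_cat (qpath_across_vertex yx1 xw) (IH w _ _ Hxz _ zx).
- by move: lt_yz_k; rewrite yz_w; lia.
- by left; exists x, w.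
- by rewrite eq_sym -cdist_gt0 xw.
Qed.

Definition theta_reachable a b c d : Prop :=
  edge_of s [set a; b] -> edge_of s [set c; d] ->
  qpath s [set a; b] [set c; d] (theta_dist a b c d).

Lemma theta_reachable_swapl a b c d : theta_reachable b a c d -> theta_reachable a b c d.
Proof. by rewrite /theta_reachable theta_dist_swapl (set2C b a). Qed.

Lemma theta_reachable_swapr a b c d : theta_reachable a b d c -> theta_reachable a b c d.
Proof. by rewrite /theta_reachable theta_dist_swapr (set2C d c). Qed.

Lemma theta_reachable_shared a b d : theta_reachable a b a d.
Proof.
move=> Hab Had; rewrite theta_dist_shared.
by apply: qpath_fan; rewrite // eq_sym; [apply: edge_of_neq Hab | apply: edge_of_neq Had].
Qed.

(* Since b precedes c and d counterclockwise from a, turning {a, b} about b, or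
   across b, lowers theta_dist by exactly the theta-length of the step. *)
Lemma theta_reachable_ordered a b c d :
  (forall a' b' c' d', theta_dist a' b' c' d' < theta_dist a b c d ->
     theta_reachable a' b' c' d') ->
  0 < cdist a b < cdist a c -> cdist a b < cdist a d -> theta_reachable a b c d.
Proof.
move=> IH /andP[ab_gt0 ab_lt_ac] ab_lt_ad Hab Hcd.
have [ab_gt1|ab_le1] := ltnP 1 (cdist a b).
  have Hba : edge_of s [set b; a] by rewrite set2C.
  have [u aub bau] := ccw_triangle_on_edge Hba ab_gt1; have [_ _ _ Hbu] := bau.
  move: (aub) => /andP[au_gt0 au_lt_ab].
  have e_theta : theta_dist a b c d = cdist a u + theta_dist b u c d.
    rewrite /theta_dist (cdist_sub (a := a) (x := b) (y := c))
      ?(cdist_sub (a := a) (x := u) (y := d)) ?(cdist_sub (a := a) (x := b) (y := d))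
      ?(cdist_sub (a := a) (x := u) (y := c)); lia.
  rewrite e_theta (set2C a b); apply: qpath_cons (IH b u c d _ Hbu Hcd).
    by left; exists b, a, u.
  by rewrite e_theta; lia.
have ab1 : cdist a b = 1 by lia.
have [w bw] := cdist_succ_exists b (ltnW n_ge3).
have aw2 : cdist a w = 2 by move: n_ge3 ab1 bw; cdist_lia.
have e_theta : theta_dist a b c d = 2 + theta_dist b w c d.
  rewrite /theta_dist (cdist_sub (a := a) (x := b) (y := c))
    ?(cdist_sub (a := a) (x := w) (y := d)) ?(cdist_sub (a := a) (x := b) (y := d))
    ?(cdist_sub (a := a) (x := w) (y := c)); lia.
rewrite e_theta; apply: qpath_cat (qpath_across_vertex ab1 bw) (IH b w c d _ _ Hcd).
  by rewrite e_theta; lia.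
by left; exists b, w.
Qed.

Lemma qpath_theta_dist a b c d : theta_reachable a b c d.
Proof.
have [k] := ubnP (theta_dist a b c d); elim: k a b c d => // k IH a b c d lt_k.
have {}IH a' b' c' d' :
    theta_dist a' b' c' d' < theta_dist a b c d -> theta_reachable a' b' c' d'.
  by move=> lt; apply: IH; lia.
have [<-|ac] := eqVneq a c; first exact: theta_reachable_shared.
have [<-|ad] := eqVneq a d; first by apply/theta_reachable_swapr/theta_reachable_shared.
have [<-|bc] := eqVneq b c; first by apply/theta_reachable_swapl/theta_reachable_shared.
have [<-|bd] := eqVneq b d.
  by apply/theta_reachable_swapl/theta_reachable_swapr/theta_reachable_shared.
move=> Hab Hcd; have ab_gt0 : 0 < cdist a b by rewrite cdist_gt0 (edge_of_neq Hab).
have ac_gt0 : 0 < cdist a c by rewrite cdist_gt0.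
have ad_gt0 : 0 < cdist a d by rewrite cdist_gt0.
case: (ltngtP (cdist a b) (cdist a c)) => [ab_ac|ac_ab|/cdistI/eqP]; last by rewrite (negbTE bc).
  case: (ltngtP (cdist a b) (cdist a d)) => [ab_ad|ad_ab|/cdistI/eqP]; last by rewrite (negbTE bd).
    by apply: theta_reachable_ordered; rewrite ?ab_gt0.
  case: (edge_of_ncross Hab Hcd); exists a, b, d, c; rewrite (set2C c d).
  by split=> //; move: ab_gt0 ac_gt0 ad_gt0 ab_ac ad_ab; cdist_lia.
case: (ltngtP (cdist a b) (cdist a d)) => [ab_ad|ad_ab|/cdistI/eqP]; last by rewrite (negbTE bd).
  case: (edge_of_ncross Hab Hcd); exists a, b, c, d.
  by split=> //; move: ab_gt0 ac_gt0 ad_gt0 ac_ab ab_ad; cdist_lia.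
apply: theta_reachable_swapl Hab Hcd; apply: theta_reachable_ordered.
- by move=> a' b' c' d'; rewrite (theta_dist_swapl a b); apply: IH.
- by move: ab_gt0 ac_gt0 ad_gt0 ac_ab ad_ab; cdist_lia.
- by move: ab_gt0 ac_gt0 ad_gt0 ac_ab ad_ab; cdist_lia.
Qed.

Lemma min_theta_theta_dist a b c d m : edge_of s [set a; b] -> edge_of s [set c; d] ->
  min_theta s [set a; b] [set c; d] m <-> m = theta_dist a b c d.
Proof.
move=> Hab Hcd; have opt := qpath_theta_dist Hab Hcd.
split=> [[p m_min]|->]; last by split=> // L; apply: theta_dist_le_qpath.
by apply/eqP; rewrite eqn_leq m_min // theta_dist_le_qpath.
Qed.

End Quiver.

Theorem proposition2p21 (n : nat) (Hn : 3 <= n)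
    (s s' : {set {set 'I_n}}) (i i' j j' : 'I_n) :
  triangulation s -> triangulation s' ->
  edge_of s [set i; i'] -> edge_of s' [set i; i'] ->
  edge_of s [set j; j'] -> edge_of s' [set j; j'] ->
  forall m : nat,
    min_theta s [set i; i'] [set j; j'] m <-> min_theta s' [set i; i'] [set j; j'] m.
Proof.
move=> tri_s tri_s' Hs_i Hs'_i Hs_j Hs'_j m.
by rewrite (min_theta_theta_dist Hn tri_s m Hs_i Hs_j) (min_theta_theta_dist Hn tri_s' m Hs'_i Hs'_j).
Qed.
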